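(* (1) For every $\mathbf{x}\in\mathcal{O}$, its code $(i_j)_{j\ge1}$ is the label of an infinite path in the automaton $\mathcal{M}$ starting at state $A$. (2) Conversely, let $(i_j)_{j\ge1}$ be the label of an infinite path in $\mathcal{M}$ starting at $A$. If $(i_j)$ is not eventually $0$, then there is exactly one infinite binary word $\mathbf{x}$ coded by $(i_j)$, and $\mathbf{x}\in\mathcal{O}$. If $(i_j)$ is eventually $0$, say $i_j=0$ for all $j\ge c$, then the infinite words coded by $(i_j)$ are exactly two, one with tail $\mathbf{t}$ (i.e. $\mathbf{y}_{c-1}=\mathbf{t}$) and one with tail $\overline{\mathbf{t}}$, and: if from step $c$ on the path cycles at state $A$ or between states $B$ and $D$, both of these words are in $\mathcal{O}$; if it cycles between $J$ and $K$, exactly the word with tail $\mathbf{t}$ is in $\mathcal{O}$; if it cycles between $G$ and $H$, exactly the word with tail $\overline{\mathbf{t}}$ is in $\mathcal{O}$.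
   Context: $\Sigma=\{0,1\}$. An overlap is a word $axaxa$ with $a\in\Sigma$, $x\in\Sigma^*$; a word is overlap-free if it has no overlap as a factor. $\mathcal{O}$ is the set of right-infinite binary overlap-free words, $\mu$ is the morphism $0\mapsto01$, $1\mapsto10$, $\mathbf{t}=\mu^\omega(0)$, $\overline{\mathbf{t}}=\mu^\omega(1)$. Let $p_0=\epsilon$, $p_1=0$, $p_2=00$, $p_3=1$, $p_4=11$. A sequence $(i_j)_{j\ge1}$ over $\{0,1,2,3,4\}$ codes an infinite binary word $\mathbf{x}$ if there are infinite binary words $\mathbf{y}_0=\mathbf{x},\mathbf{y}_1,\mathbf{y}_2,\dots$ with $\mathbf{y}_{j-1}=p_{i_j}\mu(\mathbf{y}_j)$ for all $j\ge1$. For $\mathbf{x}\in\mathcal{O}$, the code of $\mathbf{x}$ is the unique sequence $(i_j)$ coding $\mathbf{x}$ with all $\mathbf{y}_j\in\mathcal{O}$ (which exists and is unique by the Restivo–Salemi factorization: each $\mathbf{x}\in\mathcal{O}$ is uniquely $p\mu(\mathbf{y})$ with $p\in\{p_0,\dots,p_4\}$, $\mathbf{y}\in\mathcal{O}$). The automaton $\mathcal{M}$ has states $A,B,C,D,E,F,G,H,I,J,K$, input alphabet $\{0,1,2,3,4\}$, and exactly the following transitions: $A\xrightarrow{0}A$, $A\xrightarrow{1}B$, $A\xrightarrow{2}C$, $A\xrightarrow{3}D$, $A\xrightarrow{4}E$; $B\xrightarrow{0}D$, $B\xrightarrow{1}B$, $B\xrightarrow{3}E$; $D\xrightarrow{0}B$,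 $D\xrightarrow{1}C$, $D\xrightarrow{3}D$; $C\xrightarrow{0}F$, $C\xrightarrow{3}E$; $E\xrightarrow{0}I$, $E\xrightarrow{1}C$; $F\xrightarrow{3}G$; $I\xrightarrow{1}J$; $J\xrightarrow{0}K$, $J\xrightarrow{1}B$; $K\xrightarrow{0}J$, $K\xrightarrow{1}C$; $G\xrightarrow{0}H$, $G\xrightarrow{3}D$; $H\xrightarrow{0}G$, $H\xrightarrow{3}E$. *)

From mathcomp Require Import all_boot.
Set Implicit Arguments. Unset Strict Implicit. Unset Printing Implicit Defensive.

(* Binary alphabet Sigma = {0,1} encoded as bool: 0 = false, 1 = true.
   Right-infinite binary words are functions nat -> bool. *)
Definition word := nat -> bool.

Definition factor_at (w : word) (i : nat) (u : seq bool) : Prop :=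
  forall k, k < size u -> w (i + k) = nth false u k.

Definition has_overlap (w : word) : Prop :=
  exists (i : nat) (a : bool) (x : seq bool),
    factor_at w i (a :: x ++ a :: x ++ [:: a]).

Definition overlap_free (w : word) : Prop := ~ has_overlap w.

Definition mu_seq (s : seq bool) : seq bool :=
  flatten (map (fun b => [:: b; ~~ b]) s).

Definition mu (y : word) : word :=
  fun n => if odd n then ~~ y n./2 else y n./2.

(* t = mu^omega(0) and tbar = mu^omega(1): the n-th letter is the n-th letter
   of mu^(n+1)(a), which has length 2^(n+1) > n. *)
Definition thue : word := fun n => nth false (iter n.+1 mu_seq [:: false]) n.
Definition thue_bar : word := fun n => nth false (iter n.+1 mu_seq [:: true]) n.

Definition pref (i : nat) : seq bool :=
  match i with
  | 0 => [::]
  | 1 => [:: false]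
  | 2 => [:: false; false]
  | 3 => [:: true]
  | 4 => [:: true; true]
  | _ => [::]
  end.

Definition prepend (s : seq bool) (w : word) : word :=
  fun n => if n < size s then nth false s n else w (n - size s).

(* Sequences (i_j)_{j>=1} are represented as s : nat -> nat with s j = i_(j+1);
   sequences (y_j)_{j>=0} as ys : nat -> word with ys j = y_j.
   The relation y_(j-1) = p_(i_j) mu(y_j) (j >= 1) becomes
   ys j = p_(s j) mu(ys (j+1)) (j >= 0). *)
Definition coding_seq (s : nat -> nat) (ys : nat -> word) : Prop :=
  (forall j, s j < 5) /\
  (forall j, ys j = prepend (pref (s j)) (mu (ys j.+1))).

Definition codes (s : nat -> nat) (x : word) : Prop :=
  exists ys : nat -> word, ys 0 = x /\ coding_seq s ys.

Definition codes_with (s : nat -> nat) (c : nat) (w : word) (x : word) : Prop :=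
  exists ys : nat -> word, ys 0 = x /\ ys c = w /\ coding_seq s ys.

Definition is_code (s : nat -> nat) (x : word) : Prop :=
  exists ys : nat -> word,
    ys 0 = x /\ coding_seq s ys /\ (forall j, overlap_free (ys j)).

Inductive state := A | B | C | D | E | F | G | H | I | J | K.

Definition delta (q : state) (a : nat) : option state :=
  match q, a with
  | A, 0 => Some A | A, 1 => Some B | A, 2 => Some C | A, 3 => Some D | A, 4 => Some E
  | B, 0 => Some D | B, 1 => Some B | B, 3 => Some E
  | D, 0 => Some B | D, 1 => Some C | D, 3 => Some D
  | C, 0 => Some F | C, 3 => Some E
  | E, 0 => Some I | E, 1 => Some C
  | F, 3 => Some G
  | I, 1 => Some J
  | J, 0 => Some K | J, 1 => Some B
  | K, 0 => Some J | K, 1 => Some C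
  | G, 0 => Some H | G, 3 => Some D
  | H, 0 => Some G | H, 3 => Some E
  | _, _ => None
  end.

(* q is an infinite path in M starting at A, labelled by s
   (q j = state after reading i_1 ... i_j) *)
Definition path_from_A (s : nat -> nat) (q : nat -> state) : Prop :=
  q 0 = A /\ forall j, delta (q j) (s j) = Some (q j.+1).

Definition is_path_label (s : nat -> nat) : Prop := exists q, path_from_A s q.

Definition zero_from (s : nat -> nat) (c : nat) : Prop := forall j, c <= j -> s j = 0.

(* An overlap in a word [p mu(y)] has even period and halves to an overlap in [c y], where [c]
   is at most one letter determined by [p]; the few short prefixes [p] where this fails are
   settled by looking at the first letters of [y]. Hence the words that may occur as [y_j]
   while reading a code form finitely many languages, one per state of M: [c y] overlap-free
   and [y] beginning with prescribed letters. One decoding step maps these languages onto each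
   other exactly along the transitions of M, so codes of overlap-free words label paths of M,
   and along a path [y_0] is overlap-free iff the tail is admissible at the state reached.
   For a code that is eventually 0 the tail is a fixed point of [mu], i.e. [t] or [tbar],
   and its admissibility is read off the first letters. Otherwise every letter of [y_0] is
   fixed after finitely many decoding steps, and decoding words admissible at distant states
   gives arbitrarily long overlap-free approximations of [y_0]. *)

From mathcomp Require Import all_boot zify.
From Stdlib Require Import FunctionalExtensionality Classical ClassicalEpsilon.
Set Implicit Arguments. Unset Strict Implicit. Unset Printing Implicit Defensive.

Lemma word_ext (w w' : word) : (forall n, w n = w' n) -> w = w'.
Proof. exact: functional_extensionality. Qed.

Lemma prepend_nil w : prepend [::] w = w.
Proof. by apply: word_ext => n; rewrite /prepend subn0. Qed.

Lemma prepend_cat s t w : prepend s (prepend t w) = prepend (s ++ t) w.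
Proof.
apply: word_ext => n; rewrite /prepend size_cat nth_cat.
case: ltnP => Hs; first by rewrite ltn_addr.
by rewrite subnDA -(ltn_add2l (size s)) subnKC.
Qed.

Lemma mu_prepend b y : mu (prepend [:: b] y) = prepend [:: b; ~~ b] (mu y).
Proof.
apply: word_ext => -[|[|n]] //.
by rewrite /prepend /mu /= negbK subn1 subn2.
Qed.

Lemma prepend_cons_mu b y n : prepend [:: b] (mu y) n = mu (prepend [:: ~~ b] y) n.+1.
Proof. by rewrite mu_prepend /prepend /= negbK; case: n. Qed.

Lemma mu_inj : injective mu.
Proof.
move=> y y' /(congr1 (fun w => w _.*2)) E; apply: word_ext => n.
by have := E n; rewrite /mu odd_double doubleK.
Qed.

Lemma prepend_inj p : injective (prepend p).
Proof.
move=> w w' /(congr1 (fun v => v (size p + _))) E; apply: word_ext => n.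
by have := E n; rewrite /prepend ltnNge leq_addr addKn.
Qed.

(** * Overlaps as periodic windows *)

Definition overlap_at (w : word) (i p : nat) : Prop :=
  forall k, k <= p -> w (i + k) = w (i + k + p).

Lemma factor_at_cat w i u v :
  factor_at w i (u ++ v) <-> factor_at w i u /\ factor_at w (i + size u) v.
Proof.
rewrite /factor_at size_cat; split=> [Huv | [Hu Hv] k Hk].
- split=> k Hk; first by rewrite Huv ?nth_cat ?Hk // ltn_addr.
  by rewrite -addnA Huv ?ltn_add2l // nth_cat ltnNge leq_addr addKn.
- rewrite nth_cat; case: ltnP => Hku; first exact: Hu.
  by rewrite -Hv -?addnA ?subnKC // -(ltn_add2l (size u)) subnKC.
Qed.

Lemma overlap_at_window w i p :
  overlap_at w i p <->
  (forall k, k < p -> w (i + k) = w (i + p + k)) /\ w (i + p) = w (i + p + p).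
Proof.
split=> [Hw | [Hw Hlast] k].
- split=> [k Hk|]; last by have := Hw p (leqnn p).
  by rewrite Hw 1?ltnW // addnAC.
by rewrite leq_eqVlt => /predU1P [->|Hk] //; rewrite Hw // addnAC.
Qed.

Lemma overlap_freeP w : overlap_free w <-> forall i p, 0 < p -> ~ overlap_at w i p.
Proof.
split=> [Hfree i [//|p] _ /overlap_at_window [Hper Hlast] | Hno [i [a [x]]]].
- pose v := w i :: mkseq (fun k => w (i + k.+1)) p.
  have Hsv : size v = p.+1 by rewrite /= size_mkseq.
  have Hv : factor_at w i v.
    by move=> [_|k]; rewrite ?addn0 //= size_mkseq ltnS => Hk; rewrite nth_mkseq ?addnS.
  apply: Hfree; exists i, (w i), (behead v).
  rewrite (_ : _ :: _ = v ++ v ++ [:: w i]) //.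
  apply/factor_at_cat; split=> //; apply/factor_at_cat; split.
  + by move=> k; rewrite Hsv => Hk; rewrite -Hper // Hv ?Hsv.
  + by case=> // _; rewrite Hsv /= addn0 -Hlast -[i + p.+1]addn0 -Hper // addn0.
rewrite -cat_cons -[_ :: x ++ _]cat_cons.
move=> /factor_at_cat [Hv /factor_at_cat [Hv' Hlast]].
apply: (Hno i (size (a :: x))) => //; apply/overlap_at_window; split.
- by move=> k Hk; rewrite Hv // Hv'.
- by have := Hlast 0 isT; have := Hv' 0 isT; rewrite !addn0 /= => -> ->.
Qed.

Lemma overlap_at_shift w w' i p :
  (forall n, w n = w' n.+1) -> overlap_at w i p <-> overlap_at w' i.+1 p.
Proof. by move=> Ew; split=> Hw k Hk; have := Hw k Hk; rewrite !Ew !addSn. Qed.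

Lemma overlap_free_suffix w w' : (forall n, w n = w' n.+1) -> overlap_free w' -> overlap_free w.
Proof.
move=> Ew /overlap_freeP Hno; apply/overlap_freeP => i p p_gt0 /(overlap_at_shift _ _ Ew).
exact: Hno.
Qed.

Lemma overlap_free_of_prefixes w :
  (forall N, exists2 w', overlap_free w' & forall n, n <= N -> w n = w' n) -> overlap_free w.
Proof.
move=> Hpref; apply/overlap_freeP => i p p_gt0 Hw.
have [w' /overlap_freeP Hw' Ew] := Hpref (i + p + p).
by apply: (Hw' i p p_gt0) => k Hk; rewrite -!Ew ?Hw //; lia.
Qed.

Lemma not_overlap_free_window w i p : 0 < p ->
  all (fun k => w (i + k) == w (i + k + p)) (iota 0 p.+1) -> ~ overlap_free w.
Proof.
move=> p_gt0 /allP Hw /overlap_freeP Hno; apply: (Hno i p p_gt0) => k Hk.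
by apply/eqP/Hw; rewrite mem_iota ltnS.
Qed.

(** * Overlaps and the morphism [mu] *)

Lemma mu_addn_double w n k :
  mu w (n + k.*2) = if odd n then ~~ w (n./2 + k) else w (n./2 + k).
Proof. by rewrite /mu oddD odd_double addbF; congr (if _ then ~~ w _ else w _); lia. Qed.

Lemma mu_even_succ w m : ~~ odd m -> mu w m.+1 = ~~ mu w m.
Proof. by move=> /negbTE m_even; rewrite /mu /= uphalf_half m_even. Qed.

Lemma mu_eq_succ_odd w m : mu w m = mu w m.+1 -> odd m.
Proof. by apply: contraPT => /mu_even_succ ->; case: (mu w m). Qed.

Lemma overlap_at_mu_even w i p : 0 < p -> overlap_at (mu w) i p -> ~~ odd p.
Proof.
move=> p_gt0 Hw; apply/negP => p_odd.
(* inside the window every letter flips: at even positions by definition of [mu], at odd positions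
   because they lie an odd period away from an even one *)
have Hflip k : k < p + p -> mu w (i + k).+1 = ~~ mu w (i + k).
  move=> Hk; case Hik: (odd (i + k)); last by rewrite mu_even_succ ?Hik.
  have [Hkp | Hpk] := ltnP k p.
    rewrite (Hw k (ltnW Hkp)) -addnS (Hw k.+1 Hkp) addnS addSn mu_even_succ //.
    by rewrite oddD Hik p_odd.
  have -> : i + k = i + (k - p) + p by lia.
  rewrite -Hw; last by lia.
  have -> : (i + (k - p) + p).+1 = i + (k - p).+1 + p by lia.
  rewrite -Hw; last by lia.
  rewrite addnS mu_even_succ //.
  have : odd (i + (k - p)) (+) odd p = odd (i + k) by rewrite -oddD; congr odd; lia.
  by rewrite Hik p_odd; case: odd.
have Hwin k : k <= p + p -> mu w (i + k) = odd k (+) mu w i.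
  elim: k => [|k IHk Hk]; first by rewrite addn0.
  by rewrite addnS Hflip // IHk 1?ltnW //=; case: odd; case: (mu w i).
by have := Hw 0 isT; rewrite addn0 Hwin 1?leq_addr // p_odd; case: (mu w i).
Qed.

Lemma overlap_at_mu w i p : 0 < p -> overlap_at (mu w) i p ->
  exists q, [/\ p = q.*2, 0 < q & overlap_at w i./2 q].
Proof.
move=> p_gt0 Hw.
have [q Ep] : exists q, p = q.*2.
  exists p./2; rewrite -[p in LHS]odd_double_half.
  by rewrite (negbTE (overlap_at_mu_even p_gt0 Hw)).
subst p; exists q; split=> //; first by rewrite double_gt0 in p_gt0.
move=> k Hk; have := Hw k.*2; rewrite leq_double => /(_ Hk).
by rewrite -addnA -doubleD !mu_addn_double addnA; case: odd => // /negb_inj.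
Qed.

Lemma overlap_at_mu_lift w (e : bool) i q :
  overlap_at w i q -> overlap_at (mu w) (e + i.*2) q.*2.
Proof.
move=> Hw k Hk; have -> : e + i.*2 + k = (e + k) + i.*2 by lia.
rewrite -[_ + q.*2]addnA -doubleD !mu_addn_double addnA [_ + i]addnC Hw //; lia.
Qed.

Lemma overlap_free_mu y : overlap_free (mu y) <-> overlap_free y.
Proof.
rewrite !overlap_freeP; split=> Hno i p p_gt0.
- by move/(overlap_at_mu_lift false); apply: Hno; rewrite double_gt0.
- by case/(overlap_at_mu p_gt0) => q [_ q_gt0]; apply: Hno.
Qed.

Lemma overlap_at_cons_mu b y i p : 0 < p -> overlap_at (prepend [:: b] (mu y)) i p ->
  exists q, [/\ p = q.*2, 0 < q & overlap_at (prepend [:: ~~ b] y) i.+1./2 q].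
Proof. by move=> p_gt0 /(overlap_at_shift _ _ (prepend_cons_mu b y)); apply: overlap_at_mu. Qed.

Lemma overlap_free_cons_mu b y :
  overlap_free (prepend [:: b] (mu y)) <-> overlap_free (prepend [:: ~~ b] y).
Proof.
rewrite !overlap_freeP; split=> Hno i p p_gt0.
- move/(overlap_at_mu_lift true)/(overlap_at_shift _ _ (prepend_cons_mu b y)).
  by apply: Hno; rewrite double_gt0.
- by case/(overlap_at_cons_mu p_gt0) => q [_ q_gt0]; apply: Hno.
Qed.

Lemma overlap_free_pair_mu b1 b2 y : b1 != b2 ->
  overlap_free (prepend [:: b1; b2] (mu y)) <-> overlap_free (prepend [:: b1] y).
Proof. by case: b1; case: b2 => // _; rewrite -mu_prepend overlap_free_mu. Qed.

Ltac refute_overlap_at i p :=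
  apply: (@not_overlap_free_window _ i p) => //; rewrite /= /prepend /mu /=;
  repeat match goal with E : ?y ?n = _ |- context [?y ?n] => rewrite E end; done.

(* every overlap needed below has period at most 3 and starts before position 5 *)
Ltac refute_small_overlap :=
  first [ refute_overlap_at 0 1 | refute_overlap_at 1 1 | refute_overlap_at 2 1
        | refute_overlap_at 3 1 | refute_overlap_at 4 1 | refute_overlap_at 0 2
        | refute_overlap_at 1 2 | refute_overlap_at 2 2 | refute_overlap_at 3 2
        | refute_overlap_at 4 2 | refute_overlap_at 0 3 | refute_overlap_at 1 3
        | refute_overlap_at 2 3 | refute_overlap_at 3 3 | refute_overlap_at 4 3 ].

Lemma not_overlap_free_triple_mu b1 b2 y : ~ overlap_free (prepend [:: b1; b2; b2] (mu y)).
Proof.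
by case E0: (y 0); case E1: (y 1); case: b1; case: b2; refute_small_overlap.
Qed.

Lemma overlap_free_square_mu b y :
  overlap_free (prepend [:: b; b] (mu y)) <->
  overlap_free (prepend [:: ~~ b] y) /\ [&& y 0 == ~~ b, y 1 == b & y 2 == ~~ b].
Proof.
have Etail n : prepend [:: b] (mu y) n = prepend [:: b; b] (mu y) n.+1 by case: n.
split=> [Hfree | [Hfree /and3P [/eqP E0 /eqP E1 /eqP E2]]].
  have /overlap_free_cons_mu Htail := overlap_free_suffix Etail Hfree.
  split=> //; apply: contraPT Hfree; clear Etail Htail.
  by case E0: (y 0); case E1: (y 1); case E2: (y 2); case: b => //= _;
    refute_small_overlap.
move/overlap_free_cons_mu: Hfree; rewrite !overlap_freeP => Hno [|i] p p_gt0; last first.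
  by move/(overlap_at_shift _ _ Etail); apply: Hno.
have Wtail n : prepend [:: b; b] (mu y) n.+2 = mu y n by rewrite /prepend subn2.
case: p p_gt0 => [|[|[|[|m]]]] // _ Hw.
- by have := Hw 1 isT; rewrite /prepend /mu /= E0; case: (b).
- by have := Hw 0 isT; rewrite /prepend /mu /= E0; case: (b).
- by have := Hw 3 isT; rewrite /prepend /mu /= E0 E2; case: (b).
(* the squares [b b] at positions 0 and 3 repeat at [p] and [p + 3], i.e. at positions
   [p - 2] and [p + 1] of [mu y]; a square in [mu y] starts at an odd position *)
have := Hw 0 isT; have := Hw 1 isT; have := Hw 3 isT; have := Hw 4 isT.
rewrite !add0n !addSn !add0n !Wtail.
have -> : mu y 1 = b by rewrite /mu /= E0 negbK.
have -> : mu y 2 = b by rewrite /mu /= E1.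
move=> /= H6 H5 H3 H2.
have := mu_eq_succ_odd (etrans (esym H2) H3); have := mu_eq_succ_odd (etrans (esym H5) H6).
by rewrite /=; case: odd.
Qed.

(** * The Thue-Morse words *)

Definition tm (a : bool) : word := fun n => nth false (iter n.+1 mu_seq [:: a]) n.

Lemma mu_seq_cat s t : mu_seq (s ++ t) = mu_seq s ++ mu_seq t.
Proof. by rewrite /mu_seq map_cat flatten_cat. Qed.

Lemma size_mu_seq s : size (mu_seq s) = (size s).*2.
Proof. by elim: s => //= b s IHs; rewrite -/(mu_seq s) IHs. Qed.

Lemma nth_mu_seq s n : n < (size s).*2 -> nth false (mu_seq s) n = mu (nth false s) n.
Proof.
elim: s n => [|b s IHs] [|[|n]] //= Hn; rewrite -/(mu_seq s) IHs; last by lia.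
by rewrite /mu /= negbK.
Qed.

Lemma size_tm_block k a : size (iter k mu_seq [:: a]) = 2 ^ k.
Proof. by elim: k => //= k IHk; rewrite size_mu_seq IHk expnS mul2n. Qed.

Lemma tm_block_succ k a :
  iter k.+1 mu_seq [:: a] = iter k mu_seq [:: a] ++ iter k mu_seq [:: ~~ a].
Proof.
rewrite iterSr -cat1s.
by elim: k => //= k ->; rewrite mu_seq_cat.
Qed.

Lemma nth_tm_block_stable a k m n : k <= m -> n < 2 ^ k ->
  nth false (iter m mu_seq [:: a]) n = nth false (iter k mu_seq [:: a]) n.
Proof.
move=> /subnKC <- Hn; elim: (m - k) => [|d IHd]; first by rewrite addn0.
rewrite addnS tm_block_succ nth_cat size_tm_block IHd ifT //.
by rewrite (leq_trans Hn) // leq_exp2l // leq_addr.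
Qed.

Lemma tm_nth a k n : n < 2 ^ k -> tm a n = nth false (iter k mu_seq [:: a]) n.
Proof.
move=> Hn; have Hn1 : n < 2 ^ n.+1 := ltnW (ltn_expl n.+1 (isT : 1 < 2)).
rewrite /tm; case: (leqP k n.+1) => Hk; first exact: nth_tm_block_stable.
by rewrite [RHS](nth_tm_block_stable _ (ltnW Hk) Hn1).
Qed.

Lemma tm_mu a : mu (tm a) = tm a.
Proof.
apply: word_ext => n; have Hn : n < 2 ^ n.+1 := ltnW (ltn_expl n.+1 (isT : 1 < 2)).
have Hn2 : n < (size (iter n.+1 mu_seq [:: a])).*2 by rewrite size_tm_block; lia.
rewrite [in RHS](tm_nth a (k := n.+2)); last by rewrite expnS; lia.
rewrite iterS nth_mu_seq //.
by rewrite /mu (tm_nth a (k := n.+1)) //; lia.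
Qed.

Lemma tm_overlap_free a : overlap_free (tm a) /\ forall b, overlap_free (prepend [:: b] (tm a)).
Proof.
(* an overlap of period [p] in either word yields one of period [p./2] in one of them *)
suff Hno p : 0 < p -> forall i,
    ~ overlap_at (tm a) i p /\ forall b, ~ overlap_at (prepend [:: b] (tm a)) i p.
  by split=> [|b]; apply/overlap_freeP => i p /Hno /(_ i) [].
elim/ltn_ind: p => p IHp p_gt0 i; split=> [|b].
- rewrite -tm_mu => /(overlap_at_mu p_gt0) [q [Ep q_gt0]].
  by have [] := IHp q (ltac:(lia)) q_gt0 i./2.
- rewrite -tm_mu => /(overlap_at_cons_mu p_gt0) [q [Ep q_gt0]].
  by have [_] := IHp q (ltac:(lia)) q_gt0 i.+1./2; apply.
Qed.

Lemma mu_chain_tm (z : nat -> word) : (forall d, z d = mu (z d.+1)) -> z 0 = tm (z 0 0).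
Proof.
move=> Ez; have z_head d : z d 0 = z 0 0.
  by elim: d => // d <-; rewrite [z d]Ez.
suff Hall n d : z d n = tm (z 0 0) n by apply: word_ext => n; apply: Hall.
elim/ltn_ind: n d => -[_ d|n IHn d]; first by rewrite z_head.
by rewrite Ez -tm_mu /mu IHn //; lia.
Qed.

(** * The automaton M *)

(* The words that may occur as [y_j] while the path is in state [q]: [state_context q] is the
   complement of the letter preceding [mu y_j] in [state_context q_(j-1) ++ y_(j-1)], when it
   matters, and [state_guard q] prescribes the first letters of [y_j]. *)
Definition state_context (q : state) : seq bool :=
  match q with
  | A => [::]
  | B | C | H | I | J => [:: true]
  | D | E | F | G | K => [:: false]
  end.

Definition state_guard (q : state) (y : word) : bool :=
  match q with
  | A | B | D => true
  | C => [&& y 0, ~~ y 1 & y 2]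
  | E => [&& ~~ y 0, y 1 & ~~ y 2]
  | F => y 0 && y 1
  | G | H => y 0
  | I => ~~ y 0 && ~~ y 1
  | J | K => ~~ y 0
  end.

Definition admissible (q : state) (y : word) : Prop :=
  overlap_free (prepend (state_context q) y) /\ state_guard q y.

Lemma delta_lt5 q a q' : delta q a = Some q' -> a < 5.
Proof. by case: q; do 5? [case: a => [|a] //]. Qed.

Lemma admissible_step q a y : a < 5 ->
  admissible q (prepend (pref a) (mu y)) <->
  exists2 q', delta q a = Some q' & admissible q' y.
Proof.
move=> a_lt5.
suff -> : admissible q (prepend (pref a) (mu y)) <->
          if delta q a is Some q' then admissible q' y else False.
  case: (delta q a) => [q'|]; last by split=> // -[].
  by split=> [|[_ [<-]]]; first exists q'.
rewrite /admissible prepend_cat.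
case: q; case: a a_lt5 => [|[|[|[|[|//]]]]] _ /=;
  try by split=> // -[/not_overlap_free_triple_mu].
all: rewrite ?prepend_nil ?overlap_free_mu ?overlap_free_square_mu ?overlap_free_pair_mu //
       ?overlap_free_cons_mu /prepend /mu /=.
all: case: (y 0); case: (y 1); case: (y 2) => /=; intuition discriminate.
Qed.

Lemma admissible_A w : admissible A w <-> overlap_free w.
Proof. by rewrite /admissible prepend_nil; intuition. Qed.

Lemma tm_admissible q a : admissible q (tm a) <-> state_guard q (tm a).
Proof.
have [Hfree Hfree1] := tm_overlap_free a.
by rewrite /admissible; case: q => /=; rewrite ?prepend_nil; intuition.
Qed.

Lemma admissible_inhabited q : exists z, admissible q z.
Proof.
have Htm q' a : state_guard q' (tm a) -> exists z, admissible q' z.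
  by move=> Hg; exists (tm a); apply/tm_admissible.
have Hback q' a q'' z : delta q' a = Some q'' -> admissible q'' z ->
    exists z', admissible q' z'.
  by move=> Ed Hz; exists (prepend (pref a) (mu z)); apply/admissible_step;
    [exact: delta_lt5 Ed | exists q''].
have [zG HG] := Htm G true isT.
have [zJ HJ] := Htm J false isT.
have [zF HF] := Hback F 3 G zG erefl HG.
have [zI HI] := Hback I 1 J zJ erefl HJ.
by case: q; first [ by apply: (Htm _ false) | by apply: (Htm _ true)
                  | by apply: (Hback _ 0 F zF) | by apply: (Hback _ 0 I zI)
                  | by eexists; eassumption ].
Qed.

Fixpoint run (s : nat -> nat) (j : nat) : state :=
  if j is j'.+1 then odflt A (delta (run s j') (s j')) else A.

Lemma code_path_label x s : overlap_free x -> is_code s x -> is_path_label s.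
Proof.
move=> Hx [ys [Ex [[s_lt5 Hys] _]]].
have Hrun j : admissible (run s j) (ys j) ->
    delta (run s j) (s j) = Some (run s j.+1) /\ admissible (run s j.+1) (ys j.+1).
  by rewrite [ys j]Hys => /(admissible_step _ _ (s_lt5 j)) [q' Eq Hq']; rewrite /= Eq.
have Hadm j : admissible (run s j) (ys j).
  by elim: j => [|j /Hrun []] //; apply/admissible_A; rewrite Ex.
by exists (run s); split=> // j; have [] := Hrun j (Hadm j).
Qed.

(** * Decoding along a path *)

Fixpoint decode (s : nat -> nat) (j k : nat) (z : word) : word :=
  if k is k'.+1 then prepend (pref (s j)) (mu (decode s j.+1 k' z)) else z.

Lemma decode_add s j k m z : decode s j (k + m) z = decode s j k (decode s (j + k) m z).
Proof. by elim: k j => [|k IHk] j /=; rewrite ?addn0 // IHk addSnnS. Qed.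

Lemma coding_seq_decode s ys : coding_seq s ys -> forall j k, ys j = decode s j k (ys (j + k)).
Proof.
move=> [_ Hys] j k; elim: k j => [|k IHk] j; first by rewrite addn0.
by rewrite Hys /= IHk addSnnS.
Qed.

Lemma decode_inj s j k : injective (decode s j k).
Proof. by elim: k j => [|k IHk] j z z' //= /prepend_inj /mu_inj /IHk. Qed.

Lemma codes_with_decode s c z : (forall j, s j < 5) -> zero_from s c -> mu z = z ->
  codes_with s c z (decode s 0 c z).
Proof.
move=> s_lt5 Hzero Hz; exists (fun j => decode s j (c - j) z).
split; first by rewrite subn0.
split; first by rewrite subnn.
split=> // j; case: (ltnP j c) => Hj; first by rewrite -(subnSK Hj).
have [-> ->] : c - j = 0 /\ c - j.+1 = 0 by lia.
by rewrite /= Hzero // prepend_nil Hz.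
Qed.

Section Path.

Variables (s : nat -> nat) (q : nat -> state).
Hypothesis path_step : forall j, delta (q j) (s j) = Some (q j.+1).

Lemma path_label_lt5 j : s j < 5.
Proof. exact: delta_lt5 (path_step j). Qed.

Lemma admissible_decode j k z : admissible (q j) (decode s j k z) <-> admissible (q (j + k)) z.
Proof.
elim: k j => [|k IHk] j; first by rewrite addn0.
rewrite /= admissible_step ?path_label_lt5 // path_step addnS -addSn -IHk.
by split=> [[_ [<-]] | Hadm] //; exists (q j.+1).
Qed.

Lemma overlap_free_decode k z :
  q 0 = A -> overlap_free (decode s 0 k z) <-> admissible (q k) z.
Proof. by move=> q0; rewrite -admissible_A -q0 admissible_decode. Qed.

End Path.

Lemma path_code_eventually_zero s q c : path_from_A s q -> zero_from s c ->
  exists xt xtb : word,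
    codes_with s c thue xt /\ codes_with s c thue_bar xtb /\
    (exists n, xt n <> xtb n) /\
    (forall x, codes s x -> (forall n, x n = xt n) \/ (forall n, x n = xtb n)) /\
    ((q c = A \/ q c = B \/ q c = D) -> overlap_free xt /\ overlap_free xtb) /\
    ((q c = J \/ q c = K) -> overlap_free xt /\ ~ overlap_free xtb) /\
    ((q c = G \/ q c = H) -> ~ overlap_free xt /\ overlap_free xtb).
Proof.
move=> [q0 Hstep] Hzero; have s_lt5 := path_label_lt5 Hstep.
have Hfree a : overlap_free (decode s 0 c (tm a)) <-> state_guard (q c) (tm a).
  by rewrite (overlap_free_decode Hstep _ _ q0) tm_admissible.
exists (decode s 0 c (tm false)), (decode s 0 c (tm true)).
split; first exact: codes_with_decode s_lt5 Hzero (tm_mu false).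
split; first exact: codes_with_decode s_lt5 Hzero (tm_mu true).
split.
  by apply: not_all_ex_not => /word_ext /decode_inj /(congr1 (fun w => w 0)).
split.
  move=> x [ys [<- Hcode]].
  have Etail : ys c = tm (ys c 0).
    have := @mu_chain_tm (fun d => ys (c + d)); rewrite addn0; apply=> d.
    by case: Hcode => _ ->; rewrite Hzero ?leq_addr // prepend_nil addnS.
  rewrite (coding_seq_decode Hcode 0 c) add0n Etail.
  by case: (ys c 0); [right | left].
rewrite !Hfree; split; first by case=> [|[]] ->.
by split; case=> ->.
Qed.

Section NotEventuallyZero.

Variables (s : nat -> nat) (q : nat -> state).
Hypothesis path_step : forall j, delta (q j) (s j) = Some (q j.+1).
Hypothesis s_nonzero : forall j, exists d, s (j + d) <> 0.

Local Notation prefix_size j := (size (pref (s j))).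

Lemma prefix_size_gt0 j : s j <> 0 -> 0 < prefix_size j.
Proof. by have := path_label_lt5 path_step j; case: (s j) => [|[|[|[|[|]]]]]. Qed.

(* decoding letter [n] of [y_j] either reads it off [p_(s j)] or moves on to letter
   [(n - |p_(s j)|)/2] of [y_(j+1)]; this cannot go on forever since [s] is not eventually 0 *)
Lemma code_position_ind (P : nat -> nat -> Prop) :
  (forall j n, n < prefix_size j -> P j n) ->
  (forall j n, prefix_size j <= n -> P j.+1 (n - prefix_size j)./2 -> P j n) ->
  forall j n, P j n.
Proof.
move=> Hread Hmove.
have P0 j : P j 0.
  have [d] := s_nonzero j; elim: d j => [|d IHd] j Hd.
    by apply/Hread/prefix_size_gt0; rewrite addn0 in Hd.
  case: (ltnP 0 (prefix_size j)) => [/Hread // | Hj]; apply: Hmove => //.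
  by rewrite sub0n; apply: IHd; rewrite addSnnS.
move=> j n; elim/ltn_ind: n j => -[_ j|n IHn j]; first exact: P0.
case: (ltnP n.+1 (prefix_size j)) => [/Hread // | Hn].
by apply: Hmove => //; apply: IHn; lia.
Qed.

Lemma decode_letter_determined j n : exists k, forall z z', decode s j k z n = decode s j k z' n.
Proof.
move: j n; apply: code_position_ind => [j n Hn | j n Hn [k Hk]].
  by exists 1 => z z'; rewrite /= /prepend Hn.
by exists k.+1 => z z'; rewrite /= /prepend /mu ltnNge Hn /= (Hk z z').
Qed.

Definition code_depth j n : nat :=
  proj1_sig (constructive_indefinite_description _ (decode_letter_determined j n)).

(* the seed [tm false] is irrelevant: letter [n] is decoded deep enough to ignore it *)
Definition limit_word j : word := fun n => decode s j (code_depth j n) (tm false) n.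

Lemma decode_limit_word j n k z : code_depth j n <= k -> decode s j k z n = limit_word j n.
Proof.
rewrite /limit_word /code_depth; case: constructive_indefinite_description => /= K HK HKk.
by rewrite -(subnKC HKk) decode_add; apply: HK.
Qed.

Lemma coding_seq_limit_word : coding_seq s limit_word.
Proof.
split; first exact: path_label_lt5 path_step.
move=> j; apply: word_ext => n.
set n' := (n - prefix_size j)./2.
rewrite -(@decode_limit_word j n (maxn (code_depth j n) (code_depth j.+1 n')).+1 (tm false)).
  rewrite /= /prepend /mu; case: ltnP => // _.
  by rewrite -/n' decode_limit_word ?leq_maxr.
by rewrite ltnW // ltnS leq_maxl.
Qed.

Lemma coding_seq_limit_word_unique ys : coding_seq s ys -> ys 0 = limit_word 0.
Proof.
move=> Hcode; apply: word_ext => n.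
by rewrite (coding_seq_decode Hcode 0 (code_depth 0 n)) decode_limit_word.
Qed.

Lemma overlap_free_limit_word : q 0 = A -> overlap_free (limit_word 0).
Proof.
move=> q0; apply: overlap_free_of_prefixes => N.
pose K := \max_(n < N.+1) code_depth 0 n.
have [z Hz] := admissible_inhabited (q K).
exists (decode s 0 K z); first exact/(overlap_free_decode path_step _ _ q0).
move=> n Hn; rewrite decode_limit_word //.
exact: (@leq_bigmax _ (fun i : 'I_N.+1 => code_depth 0 i) (@Ordinal N.+1 n Hn)).
Qed.

End NotEventuallyZero.

Lemma path_code_not_eventually_zero s q : path_from_A s q -> ~ (exists c, zero_from s c) ->
  exists x, codes s x /\ overlap_free x /\ forall x', codes s x' -> forall n, x' n = x n.
Proof.
move=> [q0 Hstep] Hnz.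
have s_nonzero j : exists d, s (j + d) <> 0.
  apply: NNPP => Hall; apply: Hnz; exists j => m Hjm.
  by apply: NNPP => Hm; apply: Hall; exists (m - j); rewrite subnKC.
exists (limit_word Hstep s_nonzero 0); split.
  by exists (limit_word Hstep s_nonzero); split=> //; apply: coding_seq_limit_word.
split; first exact: overlap_free_limit_word.
by move=> x' [ys [<- /(coding_seq_limit_word_unique Hstep s_nonzero) ->]].
Qed.

Theorem theorem3 :
  (forall (x : word) (s : nat -> nat),
      overlap_free x -> is_code s x -> is_path_label s) /\
  (forall (s : nat -> nat) (q : nat -> state),
      path_from_A s q ->
      ((~ (exists c, zero_from s c)) ->
         exists x, codes s x /\ overlap_free x /\
                   forall x', codes s x' -> forall n, x' n = x n) /\
      (* 0-based c here = paper c - 1: s j = i_(j+1); ys c = y_(c_paper - 1); q c = state before reading i_(c_paper) *)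
      (forall c, zero_from s c ->
         exists xt xtb : word,
           codes_with s c thue xt /\ codes_with s c thue_bar xtb /\
           (exists n, xt n <> xtb n) /\
           (forall x, codes s x -> (forall n, x n = xt n) \/ (forall n, x n = xtb n)) /\
           ((q c = A \/ q c = B \/ q c = D) -> overlap_free xt /\ overlap_free xtb) /\
           ((q c = J \/ q c = K) -> overlap_free xt /\ ~ overlap_free xtb) /\
           ((q c = G \/ q c = H) -> ~ overlap_free xt /\ overlap_free xtb))).
Proof.
split=> [x s | s q Hpath]; first exact: code_path_label.
split; first exact: path_code_not_eventually_zero Hpath.
by move=> c; apply: path_code_eventually_zero Hpath.
Qed.
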